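(* Let $w\in S_\infty$ and let $D\in\mathcal P(w)$. If $D'$ is obtained from $D$ by applying a chute move of type 1, 2 or 3, or the inverse of a chute move of type 1, 2 or 3, then $D'\in\mathcal P(w)$.
   Context: Permutations: $S_\infty=\bigcup_n S_n$ is generated by the simple transpositions $s_a=(a\ a{+}1)$, $a\ge 1$; $l(w)$ is the Coxeter length of $w$ (minimal number of simple transpositions whose product is $w$). A pipe dream is a finite subset $D\subset\mathbb{Z}_{>0}\times\mathbb{Z}_{>0}$; its elements $(r,c)$ are called crosses (in row $r$, column $c$), and $|D|$ is the number of crosses. The reading word of $D$ is obtained by listing the crosses row by row from top to bottom ($r=1,2,\dots$), within each row from right to left (decreasing $c$), and recording for each cross $(r,c)$ its antidiagonal index $r+c-1$; this gives a word $(a_1,\dots,a_k)$ with $k=|D|$. For $u\in S_\infty$ put $u\star s_a=us_a$ if $l(us_a)=l(u)+1$ and $u\star s_a=u$ otherwise. The Demazure product of $D$ is $\delta(D)=(\cdots((e\star s_{a_1})\star s_{a_2})\cdots)\star s_{a_k}$, where $e$ is the identity. For $w\in S_\infty$, $\mathcal P(w)=\{D \text{ pipe dream}:\delta(D)=w\}$. Chute moves: fix rows $m,m+1$ and columns $c<d$, and suppose $(m,j)\in D$ and $(m+1,j)\in D$ for every $c<j<d$. - Type 1 applies if $(m,c)\notin D$, $(m+1,c)\notin D$, $(m,d)\in D$, $(m+1,d)\notin D$; its result is $(D\setminus\{(m,d)\})\cup\{(m+1,c)\}$. - Type 2 applies if $(m,c)\notin D$, $(m+1,c)\in D$, $(m,d)\in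 D$, $(m+1,d)\notin D$; its result is $D\setminus\{(m,d)\}$. - Type 3 applies under the same conditions as type 2; its result is $D\setminus\{(m+1,c)\}$. The inverse of a chute move of a given type (with given $m,c,d$) is the operation sending the result back to the original configuration (e.g. the inverse of type 2 adds the cross $(m,d)$ to a pipe dream with $(m,c)\notin D$, $(m+1,c)\in D$, $(m,d)\notin D$, $(m+1,d)\notin D$ and all interior boxes of the rectangle filled). *)

From mathcomp Require Import all_boot.
From Stdlib Require Import ClassicalEpsilon.
Set Implicit Arguments. Unset Strict Implicit. Unset Printing Implicit Defensive.

(* Permutations of the positive integers with finite support are represented
   as functions nat -> nat (the value at 0 is irrelevant: all generators fix 0). *)
Definition perm_fun := nat -> nat.

Definition idp : perm_fun := fun i => i.

Definition mulp (u v : perm_fun) : perm_fun := fun i => u (v i).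

Definition stransp (a : nat) : perm_fun :=
  fun i => if i == a then a.+1 else if i == a.+1 then a else i.

Fixpoint wordprod (r : seq nat) : perm_fun :=
  match r with
  | [::] => idp
  | a :: r' => mulp (stransp a) (wordprod r')
  end.

Definition valid_word (r : seq nat) : bool := all (fun a => 0 < a) r.

Definition in_Sinf (w : perm_fun) : Prop :=
  exists r, valid_word r /\ wordprod r = w.

Definition is_coxlen (w : perm_fun) (k : nat) : Prop :=
  (exists r, valid_word r /\ size r = k /\ wordprod r = w) /\
  (forall r, valid_word r -> wordprod r = w -> k <= size r).

Definition len_up (u : perm_fun) (a : nat) : Prop :=
  exists k, is_coxlen u k /\ is_coxlen (mulp u (stransp a)) k.+1.

Definition star (u : perm_fun) (a : nat) : perm_fun :=
  if excluded_middle_informative (len_up u a) then mulp u (stransp a) else u.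

(* Pipe dreams: finite subsets of Z>0 x Z>0, given as duplicate-free lists
   of crosses (row, column) with positive coordinates. *)
Definition pipe_dream (D : seq (nat * nat)) : bool :=
  uniq D && all (fun p => (0 < p.1) && (0 < p.2)) D.

Definition read_le (p q : nat * nat) : bool :=
  (p.1 < q.1) || ((p.1 == q.1) && (q.2 <= p.2)).

Definition reading_word (D : seq (nat * nat)) : seq nat :=
  map (fun p => p.1 + p.2 - 1) (sort read_le D).

Definition demazure (D : seq (nat * nat)) : perm_fun :=
  foldl star idp (reading_word D).

Definition in_P (w : perm_fun) (D : seq (nat * nat)) : Prop :=
  pipe_dream D /\ demazure D = w.

Definition chute_frame (D : seq (nat * nat)) (m c d : nat) : Prop :=
  0 < m /\ 0 < c /\ c < d /\
  (forall j, c < j -> j < d -> ((m, j) \in D) /\ ((m.+1, j) \in D)).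

(* D' is the result of a chute move of type 1 applied to D (rows m, m+1,
   columns c < d). Results are compared as sets. *)
Definition chute1 (D D' : seq (nat * nat)) (m c d : nat) : Prop :=
  chute_frame D m c d /\
  (m, c) \notin D /\ (m.+1, c) \notin D /\ (m, d) \in D /\ (m.+1, d) \notin D /\
  (forall x, (x \in D') = ((x != (m, d)) && (x \in D)) || (x == (m.+1, c))).

Definition chute2 (D D' : seq (nat * nat)) (m c d : nat) : Prop :=
  chute_frame D m c d /\
  (m, c) \notin D /\ (m.+1, c) \in D /\ (m, d) \in D /\ (m.+1, d) \notin D /\
  (forall x, (x \in D') = (x != (m, d)) && (x \in D)).

Definition chute3 (D D' : seq (nat * nat)) (m c d : nat) : Prop :=
  chute_frame D m c d /\
  (m, c) \notin D /\ (m.+1, c) \in D /\ (m, d) \in D /\ (m.+1, d) \notin D /\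
  (forall x, (x \in D') = (x != (m.+1, c)) && (x \in D)).

Definition chute_move (D D' : seq (nat * nat)) : Prop :=
  exists m c d, chute1 D D' m c d \/ chute2 D D' m c d \/ chute3 D D' m c d.

Definition inv_chute_move (D D' : seq (nat * nat)) : Prop := chute_move D' D.

From mathcomp Require Import all_boot zify.
From Stdlib Require Import FunctionalExtensionality ClassicalEpsilon.
Set Implicit Arguments. Unset Strict Implicit. Unset Printing Implicit Defensive.

(* Since the Coxeter length of a permutation is its number of inversions,
   [u * s_a] is [u s_a] exactly when [u a < u (a+1)], and this action on
   injective functions obeys the relations of the 0-Hecke monoid:
   [s_a s_a = s_a], commutation of distant letters, and the braid relation.
   In reading order, the crosses of the chute rectangle form two decreasing
   runs of antidiagonals, [m+d-1 .. m+c] (possibly without its first letter)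
   from row [m] and [m+d-1 .. m+c] (possibly without its last letter) from
   row [m+1]; the crosses read in between lie on antidiagonals far from the
   second run and commute past it. A chute move only toggles the two corners
   of the rectangle, and all fillings of the corners with at least one cross
   give Hecke-equivalent words: the braid relation pushed down the run, plus
   idempotence of the letter [m+c]. *)

Section SimpleTranspositions.

Implicit Types (u : perm_fun) (a i : nat).

Lemma stranspL a : stransp a a = a.+1.
Proof. by rewrite /stransp eqxx. Qed.

Lemma stranspR a : stransp a a.+1 = a.
Proof. by rewrite /stransp eqxx; case: eqP => //; lia. Qed.

Lemma stranspD a i : i != a -> i != a.+1 -> stransp a i = i.
Proof. by rewrite /stransp => /negbTE -> /negbTE ->. Qed.

Lemma stranspK a : involutive (stransp a).
Proof.
move=> i; case: (eqVneq i a) => [->|Ha]; first by rewrite stranspL stranspR.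
case: (eqVneq i a.+1) => [->|Hb]; first by rewrite stranspR stranspL.
by rewrite !stranspD.
Qed.

Lemma stransp_inj a : injective (stransp a).
Proof. exact: inv_inj (stranspK a). Qed.

Definition distant a b := (a.+1 < b) || (b.+1 < a).

Lemma stransp_comm a b i : distant a b ->
  stransp a (stransp b i) = stransp b (stransp a i).
Proof.
rewrite /distant => Hab.
case: (eqVneq i a) => [->|Ha].
  by rewrite stranspL (stranspD (i := a)) ?stranspL ?(stranspD (i := a.+1)) //; lia.
case: (eqVneq i a.+1) => [->|Ha1].
  by rewrite stranspR (stranspD (i := a.+1)) ?stranspR ?(stranspD (i := a)) //; lia.
case: (eqVneq i b) => [->|Hb].
  by rewrite stranspL (stranspD (i := b)) ?stranspL ?(stranspD (i := b.+1)) //; lia.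
case: (eqVneq i b.+1) => [->|Hb1].
  by rewrite stranspR (stranspD (i := b.+1)) ?stranspR ?(stranspD (i := b)) //; lia.
by rewrite !(stranspD (i := i)).
Qed.

Lemma mulp_stranspL u a : mulp u (stransp a) a = u a.+1.
Proof. by rewrite /mulp stranspL. Qed.

Lemma mulp_stranspR u a : mulp u (stransp a) a.+1 = u a.
Proof. by rewrite /mulp stranspR. Qed.

Lemma mulp_stranspD u a i : i != a -> i != a.+1 -> mulp u (stransp a) i = u i.
Proof. by move=> H1 H2; rewrite /mulp stranspD. Qed.

Lemma wordprod_rcons r a : wordprod (rcons r a) = mulp (wordprod r) (stransp a).
Proof. by elim: r => [|b r IH] //=; rewrite IH. Qed.

Lemma wordprod_inj r : injective (wordprod r).
Proof. elim: r => [|a r IH] //= x y; rewrite /mulp => /stransp_inj; exact: IH. Qed.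

Lemma valid_word_rcons r a : valid_word (rcons r a) = valid_word r && (0 < a).
Proof. by rewrite /valid_word all_rcons andbC. Qed.

End SimpleTranspositions.

Section CoxeterLength.

Implicit Types (u : perm_fun) (r : seq nat).

Definition word_below N r := all (fun a => a.+1 < N) r.

Definition word_bound r := foldr (fun a n => maxn a.+2 n) 0 r.

Lemma word_below_bound r : word_below (word_bound r) r.
Proof.
elim: r => //= a r IH; apply/andP; split; first by rewrite leq_max leqnn.
by apply: sub_all IH => b /= Hb; rewrite leq_max Hb orbT.
Qed.

Lemma word_below_widen N M r : N <= M -> word_below N r -> word_below M r.
Proof. by move=> HNM; apply: sub_all => b /= Hb; apply: leq_trans HNM. Qed.

Lemma word_below_rcons N r a : word_below N (rcons r a) = word_below N r && (a.+1 < N).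
Proof. by rewrite /word_below all_rcons andbC. Qed.

Lemma wordprod0 r : valid_word r -> wordprod r 0 = 0.
Proof. elim: r => //= a r IH /andP[Ha Hr]; rewrite /mulp IH // stranspD //; lia. Qed.

Definition perm_below N u := (forall i, N <= i -> u i = i) /\ injective u.

Lemma perm_below_wordprod N r : word_below N r -> perm_below N (wordprod r).
Proof.
move=> Hr; split; last exact: wordprod_inj.
elim: r Hr => //= a r IH /andP[Ha Hr] i Hi; rewrite /mulp IH // stranspD //; lia.
Qed.

Lemma perm_below_lt N u i : perm_below N u -> i < N -> u i < N.
Proof.
move=> [Hfix Hinj] HiN; rewrite ltnNge; apply/negP => HuN.
by have /Hinj := Hfix _ HuN; lia.
Qed.

Definition pairs_below N := [seq (i, j) | i <- iota 0 N, j <- iota 0 N].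

Definition inversion u (p : nat * nat) : bool := (p.1 < p.2) && (u p.2 < u p.1).

Definition ninv N u := \sum_(p <- pairs_below N) inversion u p.

Lemma mem_pairs_below N p : (p \in pairs_below N) = (p.1 < N) && (p.2 < N).
Proof.
case: p => i j /=; apply/allpairsP/andP => [[[x y] /= [Hx Hy [-> ->]]]|[Hi Hj]].
  by rewrite mem_iota in Hx; rewrite mem_iota in Hy; lia.
by exists (i, j); rewrite /= !mem_iota; split => //; lia.
Qed.

Lemma pairs_below_uniq N : uniq (pairs_below N).
Proof. by apply: allpairs_uniq; rewrite ?iota_uniq // => -[? ?] [? ?] _ _ /= [-> ->]. Qed.

Lemma ninv_widen N M u : perm_below N u -> N <= M -> ninv M u = ninv N u.
Proof.
move=> Hu HNM; rewrite /ninv (bigID (mem (pairs_below N))) /=.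
rewrite [X in _ + X]big1 ?addn0; last first.
  case=> i j; rewrite mem_pairs_below /inversion /= => Hout.
  apply/eqP; rewrite eqb0; apply/negP => /andP[Hij Hu_ji].
  have [Hfix _] := Hu; have HjN : N <= j by lia.
  rewrite (Hfix j HjN) in Hu_ji.
  case: (leqP N i) => HiN; first by rewrite (Hfix i HiN) in Hu_ji; lia.
  by have := perm_below_lt Hu HiN; lia.
rewrite -big_filter; apply: perm_big; apply: uniq_perm.
- by rewrite filter_uniq // pairs_below_uniq.
- exact: pairs_below_uniq.
- by move=> p; rewrite mem_filter !mem_pairs_below; lia.
Qed.

Lemma sum_indicator_seq (T : eqType) (s : seq T) x c :
  uniq s -> x \in s -> \sum_(p <- s) (p == x) * c = c.
Proof.
elim: s => //= y s IH /andP[Hy Hs]; rewrite big_cons in_cons.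
case: (eqVneq x y) => [->|Hne] /= Hx; last by rewrite mul0n add0n IH.
rewrite mul1n big1_seq ?addn0 // => p /andP[_ Hp].
by case: eqP => // Ep; rewrite -Ep Hp in Hy.
Qed.

(* Right multiplication by s_a permutes the pairs (i, j) and toggles exactly
   the pair {a, a+1}. *)
Lemma ninv_mulp_stransp N u a : a.+1 < N ->
  ninv N (mulp u (stransp a)) + (u a.+1 < u a) = ninv N u + (u a < u a.+1).
Proof.
move=> HaN.
pose f := fun p : nat * nat => (stransp a p.1, stransp a p.2).
have fK : involutive f by case=> i j; rewrite /f /= !stranspK.
have stransp_lt i : (stransp a i < N) = (i < N).
  by rewrite /stransp; case: eqP => ?; [|case: eqP => ?]; lia.
have Hperm : perm_eq (pairs_below N) (map f (pairs_below N)).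
  apply: uniq_perm; first exact: pairs_below_uniq.
    by rewrite map_inj_uniq ?pairs_below_uniq //; exact: inv_inj fK.
  move=> p; rewrite -{2}(fK p) mem_map; last exact: inv_inj fK.
  by rewrite !mem_pairs_below /f /= !stransp_lt.
rewrite /ninv (perm_big _ Hperm) big_map.
have Hin1 : (a, a.+1) \in pairs_below N by rewrite mem_pairs_below /=; lia.
have Hin2 : (a.+1, a) \in pairs_below N by rewrite mem_pairs_below /=; lia.
rewrite -{1}(sum_indicator_seq (u a.+1 < u a) (pairs_below_uniq N) Hin1).
rewrite -{1}(sum_indicator_seq (u a < u a.+1) (pairs_below_uniq N) Hin2).
rewrite -!big_split /=; apply: eq_bigr => -[i j] _.
rewrite /inversion /f /mulp /= !stranspK !xpair_eqE /stransp.
by repeat (case: eqP => ?; subst => /=); lia.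
Qed.

Lemma ninv_idp N : ninv N idp = 0.
Proof.
by rewrite /ninv big1 // => -[i j] _; rewrite /inversion /idp /=; apply/eqP; rewrite eqb0; lia.
Qed.

Lemma ninv_wordprod N r : word_below N r -> ninv N (wordprod r) <= size r.
Proof.
elim/last_ind: r => [|r a IH]; first by rewrite /= ninv_idp.
rewrite word_below_rcons => /andP[Hr Ha]; rewrite wordprod_rcons size_rcons.
by have := ninv_mulp_stransp (wordprod r) Ha; have := IH Hr; lia.
Qed.

Lemma no_descent_idp N u : perm_below N u -> u 0 = 0 ->
  (forall a, 0 < a -> a.+1 < N -> u a < u a.+1) -> u = idp.
Proof.
move=> Hu H0 Hasc; have [Hfix Hinj] := Hu.
have pos i : 0 < i -> 0 < u i.
  by move=> Hi; rewrite lt0n; apply/eqP => E; rewrite -H0 in E; move/Hinj: E; lia.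
have ge i : 0 < i -> i < N -> i <= u i.
  elim: i => // -[_ _ _|i IH _ Hi]; first exact: pos.
  by have := IH isT (ltnW Hi); have := Hasc i.+1 isT Hi; lia.
have le k i : i + k = N.-1 -> 0 < i -> u i <= i.
  elim: k i => [|k IH] i Hik Hi; first by have := perm_below_lt Hu (_ : i < N); lia.
  by have := IH i.+1 ltac:(lia) isT; have := Hasc i Hi ltac:(lia); lia.
apply: functional_extensionality => -[|i]; first exact: H0.
case: (leqP N i.+1) => HiN; first exact: Hfix.
by have := ge i.+1 isT HiN; have := le (N.-1 - i.+1) i.+1 ltac:(lia) isT; rewrite /idp; lia.
Qed.

Lemma idp_or_descent N u : perm_below N u -> u 0 = 0 ->
  u = idp \/ exists a, [/\ 0 < a, a.+1 < N & u a.+1 < u a].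
Proof.
move=> Hu H0.
have [Hdesc|Hnone] := boolP (has (fun a => [&& 0 < a, a.+1 < N & u a.+1 < u a]) (iota 0 N)).
  by right; case/hasP: Hdesc => a _ /and3P[Ha HaN Hlt]; exists a.
left; apply: (no_descent_idp Hu H0) => a Ha HaN.
move/hasPn: Hnone => /(_ a); rewrite mem_iota Ha HaN /= => /(_ ltac:(lia)) Hge.
have Hne : u a != u a.+1 by apply/eqP => /(proj2 Hu); lia.
lia.
Qed.

Lemma ninv_mulp_descent N u a : a.+1 < N -> u a.+1 < u a ->
  (ninv N (mulp u (stransp a))).+1 = ninv N u.
Proof. by move=> HaN Hlt; have := ninv_mulp_stransp u HaN; rewrite Hlt; lia. Qed.

Lemma reduced_word_exists N u : perm_below N u -> u 0 = 0 ->
  exists r, [/\ valid_word r, word_below N r, size r = ninv N u & wordprod r = u].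
Proof.
move Hn : (ninv N u) => n; elim: n u Hn => [|n IH] u Hn Hu H0;
  have [Eid|[a [Ha HaN Hlt]]] := idp_or_descent Hu H0;
  try by exists [::]; rewrite -Hn Eid ninv_idp.
  by have := ninv_mulp_descent HaN Hlt; lia.
pose v := mulp u (stransp a).
have Hv : ninv N v = n by have := ninv_mulp_descent HaN Hlt; rewrite /v; lia.
have Hvb : perm_below N v.
  split; last by move=> x y; rewrite /v /mulp => /(proj2 Hu) /stransp_inj.
  by move=> i Hi; rewrite /v mulp_stranspD; [exact: (proj1 Hu) | lia | lia].
have Hv0 : v 0 = 0 by rewrite /v mulp_stranspD //; lia.
have [r [Hr1 Hr2 Hr3 Hr4]] := IH v Hv Hvb Hv0.
exists (rcons r a); split.
- by rewrite valid_word_rcons Hr1.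
- by rewrite word_below_rcons Hr2.
- by rewrite size_rcons Hr3.
- rewrite wordprod_rcons Hr4; apply: functional_extensionality => i.
  by rewrite /v /mulp stranspK.
Qed.

Lemma is_coxlen_ninv N r : valid_word r -> word_below N r ->
  is_coxlen (wordprod r) (ninv N (wordprod r)).
Proof.
move=> Hv HN; have Hu := perm_below_wordprod HN; split.
  by have [r' [? ? ? ?]] := reduced_word_exists Hu (wordprod0 Hv); exists r'.
move=> r' _ Hr'.
rewrite -(ninv_widen Hu (leq_maxl N (word_bound r'))) -Hr'.
by apply: ninv_wordprod; apply: word_below_widen (word_below_bound r'); exact: leq_maxr.
Qed.

Lemma is_coxlen_uniq u k k' : is_coxlen u k -> is_coxlen u k' -> k = k'.
Proof.
move=> [[r [Hv [Hs Hw]]] H1] [[r' [Hv' [Hs' Hw']]] H2].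
by have := H1 r' Hv' Hw'; have := H2 r Hv Hw; lia.
Qed.

End CoxeterLength.

Section DemazureStar.

Implicit Types (u : perm_fun) (r : seq nat).

Definition dstar u a : perm_fun := if u a < u a.+1 then mulp u (stransp a) else u.

(* [ninv] changes by exactly one across [s_a], so [l(u s_a) = l(u) + 1]
   means that [a] is an ascent of [u]. *)
Lemma star_dstar N u a : injective u -> a.+1 < N ->
  is_coxlen u (ninv N u) -> is_coxlen (mulp u (stransp a)) (ninv N (mulp u (stransp a))) ->
  star u a = dstar u a.
Proof.
move=> Hinj HaN Hlen_u Hlen_us.
have Hstep := ninv_mulp_stransp u HaN.
have Hne : u a != u a.+1 by apply/eqP => /Hinj; lia.
rewrite /star /dstar; case: excluded_middle_informative => [[k [Hk1 Hk2]]|Hnot].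
  have := is_coxlen_uniq Hk1 Hlen_u; have := is_coxlen_uniq Hk2 Hlen_us.
  by case: (ltnP (u a) (u a.+1)) => Hlt; first done; lia.
case: ltnP => // Hlt; case: Hnot; exists (ninv N u); split => //.
by have -> : (ninv N u).+1 = ninv N (mulp u (stransp a)) by lia.
Qed.

Lemma star_wordprod r a : valid_word r -> 0 < a -> star (wordprod r) a = dstar (wordprod r) a.
Proof.
move=> Hv Ha; pose N := maxn (word_bound r) a.+2.
have HrN : word_below N r by apply: word_below_widen (word_below_bound r); exact: leq_maxl.
have HaN : a.+1 < N by rewrite leq_max leqnn orbT.
apply: (star_dstar (@wordprod_inj r) HaN); first exact: is_coxlen_ninv.
rewrite -wordprod_rcons; apply: is_coxlen_ninv; first by rewrite valid_word_rcons Hv.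
by rewrite word_below_rcons HrN.
Qed.

Lemma foldl_star_wordprod w r : valid_word r -> all (fun a => 0 < a) w ->
  foldl star (wordprod r) w = foldl dstar (wordprod r) w.
Proof.
elim: w r => //= a w IH r Hr /andP[Ha Hw]; rewrite star_wordprod //.
have [r' [Hr' ->]] : exists r', valid_word r' /\ dstar (wordprod r) a = wordprod r'.
  rewrite /dstar; case: ifP => _; last by exists r.
  by exists (rcons r a); rewrite wordprod_rcons valid_word_rcons Hr.
exact: IH.
Qed.

Lemma reading_word_pos S : pipe_dream S -> all (fun a => 0 < a) (reading_word S).
Proof.
case/andP => _ /allP HS; apply/allP => a /mapP [p].
by rewrite mem_sort => /HS /andP[H1 H2] ->; lia.
Qed.

Lemma demazure_dstar S : pipe_dream S -> demazure S = foldl dstar idp (reading_word S).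
Proof.
by move=> HS; rewrite /demazure -[idp]/(wordprod [::]) foldl_star_wordprod // reading_word_pos.
Qed.

Lemma dstar_inj u a : injective u -> injective (dstar u a).
Proof. by rewrite /dstar => Hu; case: ifP => // _ x y; rewrite /mulp => /Hu /stransp_inj. Qed.

Lemma foldl_dstar_inj u w : injective u -> injective (foldl dstar u w).
Proof. by elim: w u => //= a w IH u Hu; apply: IH; exact: dstar_inj. Qed.

Lemma dstar_asc u a : u a < u a.+1 -> dstar u a = mulp u (stransp a).
Proof. by rewrite /dstar => ->. Qed.

Lemma dstar_desc u a : ~~ (u a < u a.+1) -> dstar u a = u.
Proof. by rewrite /dstar => /negbTE ->. Qed.

End DemazureStar.

Section HeckeRelations.

Implicit Types (u v : perm_fun) (w : seq nat) (a b : nat).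

Definition hecke_eq w1 w2 :=
  forall u, injective u -> foldl dstar u w1 = foldl dstar u w2.

Lemma hecke_eq_refl w : hecke_eq w w.
Proof. by []. Qed.

Lemma hecke_eq_sym w1 w2 : hecke_eq w1 w2 -> hecke_eq w2 w1.
Proof. by move=> H u Hu; rewrite H. Qed.

Lemma hecke_eq_trans w2 w1 w3 : hecke_eq w1 w2 -> hecke_eq w2 w3 -> hecke_eq w1 w3.
Proof. by move=> H12 H23 u Hu; rewrite H12 // H23. Qed.

Lemma hecke_eq_cat w1 w2 w3 w4 :
  hecke_eq w1 w2 -> hecke_eq w3 w4 -> hecke_eq (w1 ++ w3) (w2 ++ w4).
Proof. by move=> H12 H34 u Hu; rewrite !foldl_cat H12 // H34 //; exact: foldl_dstar_inj. Qed.

Lemma hecke_eq_catl w w1 w2 : hecke_eq w1 w2 -> hecke_eq (w ++ w1) (w ++ w2).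
Proof. exact: hecke_eq_cat (hecke_eq_refl w). Qed.

Lemma hecke_eq_catr w w1 w2 : hecke_eq w1 w2 -> hecke_eq (w1 ++ w) (w2 ++ w).
Proof. by move/hecke_eq_cat; apply. Qed.

Lemma hecke_eq_idem a : hecke_eq [:: a; a] [:: a].
Proof.
move=> u _ /=; case: (boolP (u a < u a.+1)) => Hasc; last by rewrite !dstar_desc.
by rewrite (dstar_asc Hasc) dstar_desc // mulp_stranspL mulp_stranspR -leqNgt ltnW.
Qed.

Lemma hecke_eq_comm a b : distant a b -> hecke_eq [:: a; b] [:: b; a].
Proof.
move=> Hab u _ /=.
have Eb v : mulp v (stransp a) b = v b by rewrite mulp_stranspD //; move: Hab; rewrite /distant; lia.
have Eb1 v : mulp v (stransp a) b.+1 = v b.+1 by rewrite mulp_stranspD //; move: Hab; rewrite /distant; lia.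
have Ea v : mulp v (stransp b) a = v a by rewrite mulp_stranspD //; move: Hab; rewrite /distant; lia.
have Ea1 v : mulp v (stransp b) a.+1 = v a.+1 by rewrite mulp_stranspD //; move: Hab; rewrite /distant; lia.
case: (boolP (u a < u a.+1)) => Ha; case: (boolP (u b < u b.+1)) => Hb.
- rewrite (dstar_asc Ha) (dstar_asc Hb) dstar_asc ?Eb ?Eb1 // dstar_asc ?Ea ?Ea1 //.
  by apply: functional_extensionality => i; rewrite /mulp stransp_comm.
- by rewrite (dstar_desc Hb) (dstar_asc Ha) dstar_desc // Eb Eb1.
- by rewrite (dstar_desc Ha) (dstar_asc Hb) dstar_desc // Ea Ea1.
- by rewrite (dstar_desc Ha) (dstar_desc Hb) !dstar_desc.
Qed.

Lemma mulp_stranspSL u a : mulp u (stransp a.+1) a = u a.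
Proof. by rewrite mulp_stranspD //; lia. Qed.

Lemma mulp_stranspSR u a : mulp u (stransp a) a.+2 = u a.+2.
Proof. by rewrite mulp_stranspD //; lia. Qed.

(* Rewrite the innermost [dstar] of the goal as an ascent or a descent,
   deciding which by evaluating the permutation at the two relevant points. *)
Local Ltac eval_mulp := do 3 rewrite ?mulp_stranspL ?mulp_stranspR ?mulp_stranspSL ?mulp_stranspSR.
Local Ltac dstar_step := match goal with |- context [dstar ?v ?b] =>
  lazymatch v with context [dstar] => fail | _ =>
  first [ rewrite (@dstar_asc v b); [ | eval_mulp; lia]
        | rewrite (@dstar_desc v b); [ | eval_mulp; lia] ] end end.
Lemma stranspSL a : stransp a.+1 a = a.
Proof. by rewrite stranspD //; lia. Qed.

Lemma stranspSR a : stransp a a.+2 = a.+2.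
Proof. by rewrite stranspD //; lia. Qed.

Local Ltac eval_stransp := do 4 rewrite ?stranspL ?stranspR ?stranspSL ?stranspSR.

Lemma hecke_eq_braid a : hecke_eq [:: a.+1; a; a.+1] [:: a; a.+1; a].
Proof.
move=> u Hu /=.
have H01 : u a != u a.+1 by apply/eqP => /Hu; lia.
have H12 : u a.+1 != u a.+2 by apply/eqP => /Hu; lia.
have H02 : u a != u a.+2 by apply/eqP => /Hu; lia.
case: (ltnP (u a) (u a.+1)) => ?; case: (ltnP (u a.+1) (u a.+2)) => ?;
  case: (ltnP (u a) (u a.+2)) => ?; repeat dstar_step.
all: apply: functional_extensionality => i; rewrite /mulp.
all: case: (eqVneq i a) => [->|?]; [eval_stransp | case: (eqVneq i a.+1) => [->|?];
       [eval_stransp | case: (eqVneq i a.+2) => [->|?]; [eval_stransp | rewrite ?(stranspD (i := i))]]]; done.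
Qed.

Lemma hecke_eq_comm_letter a w : all (distant a) w -> hecke_eq (a :: w) (w ++ [:: a]).
Proof.
elim: w => [|b w IH] /=; first by move=> _; exact: hecke_eq_refl.
case/andP => Hab Hw.
apply: (@hecke_eq_trans ([:: b; a] ++ w)); first exact: hecke_eq_catr (hecke_eq_comm Hab).
exact: (hecke_eq_catl [:: b] (IH Hw)).
Qed.

Lemma hecke_eq_comm_words w1 w2 :
  all (fun a => all (distant a) w2) w1 -> hecke_eq (w1 ++ w2) (w2 ++ w1).
Proof.
elim: w1 => [|a w1 IH] /=; first by rewrite cats0 => _; exact: hecke_eq_refl.
case/andP => Ha Hw1.
apply: (@hecke_eq_trans ([:: a] ++ (w2 ++ w1))); first exact: (hecke_eq_catl [:: a] (IH Hw1)).
by rewrite -cat_rcons -cats1 catA; exact: hecke_eq_catr (hecke_eq_comm_letter Ha).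
Qed.

End HeckeRelations.

Section ChuteWords.

Fixpoint dec_word (b n : nat) : seq nat :=
  if n is n'.+1 then (b + n') :: dec_word b n' else [::].

Lemma dec_word_mem b n x : x \in dec_word b n -> b <= x < b + n.
Proof. by elim: n => //= n IH; rewrite in_cons => /orP[/eqP ->|/IH]; lia. Qed.

Lemma dec_wordS b k : dec_word b k.+1 = dec_word b.+1 k ++ [:: b].
Proof.
elim: k => [|k IH]; first by rewrite /= addn0.
by rewrite -[dec_word b k.+2]/((b + k.+1) :: dec_word b k.+1) IH /= addSnnS.
Qed.

(* The braid move at the front, pushed down the run by commutations. *)
Lemma hecke_eq_chute_move b k :
  hecke_eq (dec_word b k.+1 ++ dec_word b.+1 k) (dec_word b k ++ dec_word b k.+1).
Proof.
elim: k => [|k IH]; first exact: hecke_eq_refl.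
set x := b + k; set r := dec_word b k.
have E1 : dec_word b k.+2 = x.+1 :: x :: r by rewrite /= addnS.
have E2 : dec_word b.+1 k.+1 = x.+1 :: dec_word b.+1 k by rewrite /= addSn.
have E3 : dec_word b k.+1 = x :: r by [].
rewrite E1 E2 E3 /= -/r in IH *.
have Hcomm : hecke_eq (x.+1 :: r) (r ++ [:: x.+1]).
  by apply: hecke_eq_comm_letter; apply/allP => y /dec_word_mem; rewrite /distant; lia.
apply: (@hecke_eq_trans ([:: x.+1; x] ++ (x.+1 :: r) ++ dec_word b.+1 k)).
  have -> : x.+1 :: x :: r ++ x.+1 :: dec_word b.+1 k =
            [:: x.+1; x] ++ (r ++ [:: x.+1]) ++ dec_word b.+1 k by rewrite -catA.
  by apply: hecke_eq_catl; apply: hecke_eq_catr; exact: hecke_eq_sym.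
apply: (@hecke_eq_trans ([:: x; x.+1; x] ++ r ++ dec_word b.+1 k)).
  exact: hecke_eq_catr (hecke_eq_braid x).
apply: (@hecke_eq_trans ([:: x; x.+1] ++ r ++ x :: r)); first exact: (hecke_eq_catl [:: x; x.+1] IH).
have -> : x :: r ++ x.+1 :: x :: r = [:: x] ++ (r ++ [:: x.+1]) ++ x :: r by rewrite -catA.
exact: (hecke_eq_catl [:: x] (hecke_eq_catr (x :: r) Hcomm)).
Qed.

Lemma hecke_eq_chute_move_idem b k :
  hecke_eq (dec_word b k.+1 ++ dec_word b k.+1) (dec_word b k ++ dec_word b k.+1).
Proof.
apply: (@hecke_eq_trans ((dec_word b k.+1 ++ dec_word b.+1 k) ++ [:: b])).
  by rewrite {2}dec_wordS -!catA; exact: hecke_eq_refl.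
apply: (@hecke_eq_trans ((dec_word b k ++ dec_word b k.+1) ++ [:: b])).
  exact: hecke_eq_catr (hecke_eq_chute_move b k).
rewrite [in X in hecke_eq _ X]dec_wordS dec_wordS -!catA.
by apply: hecke_eq_catl; apply: hecke_eq_catl; exact: hecke_eq_idem.
Qed.

Definition chute_word b k (upper lower : bool) :=
  (if upper then dec_word b k.+1 else dec_word b k) ++
  (if lower then dec_word b k.+1 else dec_word b.+1 k).

Lemma hecke_eq_chute_word b k upper lower upper' lower' :
  upper || lower -> upper' || lower' ->
  hecke_eq (chute_word b k upper lower) (chute_word b k upper' lower').
Proof.
have Hnorm u l : u || l -> hecke_eq (chute_word b k u l) (chute_word b k false true).
  case: u; case: l => // _; [exact: hecke_eq_chute_move_idem | exact: hecke_eq_chute_move].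
move=> /Hnorm H /Hnorm H'; exact: hecke_eq_trans H (hecke_eq_sym H').
Qed.

End ChuteWords.

Section ReadingOrder.

Implicit Types (p q : nat * nat) (s S : seq (nat * nat)).

Lemma read_le_trans : transitive read_le.
Proof. by move=> [y1 y2] [x1 x2] [z1 z2]; rewrite /read_le /=; lia. Qed.

Lemma read_le_anti : antisymmetric read_le.
Proof.
move=> [x1 x2] [y1 y2]; rewrite /read_le /= => H.
by have [-> ->] : x1 = y1 /\ x2 = y2 by lia.
Qed.

Lemma read_le_total : total read_le.
Proof. by move=> [x1 x2] [y1 y2]; rewrite /read_le /=; lia. Qed.

Lemma sort_read_le_filter (P : pred (nat * nat)) s :
  (forall p q, P p -> ~~ P q -> read_le p q) ->
  sort read_le s = sort read_le (filter P s) ++ sort read_le (filter (predC P) s).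
Proof.
move=> HP; apply: (sorted_eq read_le_trans read_le_anti).
- exact: (sort_sorted read_le_total).
- rewrite (sorted_pairwise read_le_trans) pairwise_cat -!(sorted_pairwise read_le_trans).
  rewrite !(sort_sorted read_le_total) !andbT; apply/allrelP => p q.
  by rewrite !mem_sort !mem_filter => /andP[Hp _] /andP[Hq _]; exact: HP.
- rewrite perm_sort perm_sym; apply: perm_trans _ (permEl (perm_filterC P s)).
  by apply: perm_cat; apply: permEl; exact: perm_sort.
Qed.

Lemma sort_read_le_filter_eq_mem s s' (P : pred (nat * nat)) : uniq s -> uniq s' ->
  (forall p, P p -> (p \in s) = (p \in s')) ->
  sort read_le (filter P s) = sort read_le (filter P s').
Proof.
move=> Hs Hs' H; apply/(perm_sortP read_le_total read_le_trans read_le_anti).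
apply: uniq_perm; rewrite ?filter_uniq // => p; rewrite !mem_filter.
by case Hp: (P p) => //=; rewrite H.
Qed.

Definition antidiag p := p.1 + p.2 - 1.

Fixpoint row_segment (r lo n : nat) : seq (nat * nat) :=
  if n is n'.+1 then (r, lo + n') :: row_segment r lo n' else [::].

Lemma mem_row_segment r lo n p : (p \in row_segment r lo n) = (p.1 == r) && (lo <= p.2 < lo + n).
Proof.
case: p => p1 p2 /=; elim: n => [|n IH] /=; first by rewrite in_nil; lia.
by rewrite in_cons IH xpair_eqE; lia.
Qed.

Lemma row_segment_uniq r lo n : uniq (row_segment r lo n).
Proof. by elim: n => //= n ->; rewrite mem_row_segment /=; lia. Qed.

Lemma row_segment_sorted r lo n : sorted read_le (row_segment r lo n).
Proof.
elim: n => //= n IH; rewrite (path_sortedE read_le_trans) IH andbT.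
by apply/allP => -[x1 x2]; rewrite mem_row_segment /read_le /=; lia.
Qed.

Lemma antidiag_row_segment r lo n : 0 < r + lo ->
  map antidiag (row_segment r lo n) = dec_word (r + lo - 1) n.
Proof. by move=> H; elim: n => //= n ->; congr (_ :: _); rewrite /antidiag /=; lia. Qed.

Lemma sort_filter_row_segment S (P : pred (nat * nat)) r lo n : uniq S ->
  (forall p, (p \in S) && P p = (p \in row_segment r lo n)) ->
  sort read_le (filter P S) = row_segment r lo n.
Proof.
move=> HS H; apply: (sorted_eq read_le_trans read_le_anti).
- exact: (sort_sorted read_le_total).
- exact: row_segment_sorted.
- apply: uniq_perm; rewrite ?sort_uniq ?filter_uniq ?row_segment_uniq //.
  by move=> p; rewrite mem_sort mem_filter andbC H.
Qed.

End ReadingOrder.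

Section Regions.

Variables m c d : nat.

(* Reading order around rows [m], [m+1] and columns [c < d]: 1 is the row-[m]
   segment [(c, d]], 3 the row-[m+1] segment [[c, d)], 2 what lies between
   them, and 0 and 4 what comes before and after. *)
Definition region (p : nat * nat) : nat :=
  if p.1 < m then 0
  else if p.1 == m then (if d < p.2 then 0 else if c < p.2 then 1 else 2)
  else if p.1 == m.+1 then (if d <= p.2 then 2 else if c <= p.2 then 3 else 4)
  else 4.

Lemma region_read_le p q : region p < region q -> read_le p q.
Proof. by case: p q => p1 p2 [q1 q2]; rewrite /region /read_le /=; do !case: ifP; lia. Qed.

Lemma region_le4 p : region p <= 4.
Proof. by rewrite /region; do !case: ifP. Qed.

Lemma region2 p : region p = 2 -> ((p.1 == m) && (p.2 <= c)) || ((p.1 == m.+1) && (d <= p.2)).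
Proof. by rewrite /region; do !case: ifP; lia. Qed.

Definition region_word i S := map antidiag (sort read_le (filter (fun p => region p == i) S)).

Lemma sort_region_ge i S :
  sort read_le (filter (fun p => i <= region p) S) =
  sort read_le (filter (fun p => region p == i) S) ++
  sort read_le (filter (fun p => i < region p) S).
Proof.
rewrite (@sort_read_le_filter (fun p => region p <= i)); last first.
  by move=> p q /= Hp; rewrite -ltnNge => Hq; apply: region_read_le; lia.
by rewrite -!filter_predI; congr (sort _ _ ++ sort _ _); apply: eq_filter => p /=; lia.
Qed.

Lemma reading_word_regions S : reading_word S =
  region_word 0 S ++ region_word 1 S ++ region_word 2 S ++ region_word 3 S ++ region_word 4 S.
Proof.
rewrite /reading_word /region_word -!map_cat; congr map.
rewrite -[S in LHS](@filter_predT _ S) -(eq_filter (a1 := fun p => 0 <= region p)) //.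
rewrite !(sort_region_ge 0, sort_region_ge 1, sort_region_ge 2, sort_region_ge 3, sort_region_ge 4).
rewrite (@eq_filter _ (fun p => 4 < region p) pred0); last by move=> p; apply/negbTE; rewrite -leqNgt region_le4.
by rewrite filter_pred0 cats0.
Qed.

End Regions.

Lemma andb_eq_of_orb (b q r e : bool) : (r -> b) -> (e -> ~~ b) -> q = r || e -> b && q = r.
Proof.
move=> Hrb Heb ->; case: r Hrb => [/(_ isT) -> // | _].
by case: e Heb => [/(_ isT) /negbTE -> // | _]; rewrite andbF.
Qed.

Section ChuteFrame.

Variables (m c k : nat) (S : seq (nat * nat)).
Local Notation d := (c + k + 1).

Hypotheses (HS : pipe_dream S) (Hm : 0 < m) (Hc : 0 < c).
Hypothesis Hinterior : forall j, c < j -> j < d -> ((m, j) \in S) /\ ((m.+1, j) \in S).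
Hypotheses (Hmc : (m, c) \notin S) (Hm1d : (m.+1, d) \notin S).

Let HSuniq : uniq S. Proof. by case/andP: HS. Qed.

Lemma region_word_upper : region_word m c d 1 S =
  if (m, d) \in S then dec_word (m + c) k.+1 else dec_word (m + c) k.
Proof.
rewrite /region_word; case: ifP => Hmd.
  rewrite (@sort_filter_row_segment _ _ m c.+1 k.+1) // ?antidiag_row_segment; [congr dec_word; lia | lia |].
  move=> [x1 x2]; rewrite mem_row_segment /=; apply: (andb_eq_of_orb (e := false)) => //.
    move=> /andP[/eqP -> H]; case: (ltnP x2 d) => H2; first by case: (@Hinterior x2 ltac:(lia) H2).
    by have -> : x2 = d by lia.
  by rewrite /region /= orbF; do !case: ifP; lia.
rewrite (@sort_filter_row_segment _ _ m c.+1 k) // ?antidiag_row_segment; [congr dec_word; lia | lia |].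
move=> [x1 x2]; rewrite mem_row_segment /=.
apply: (andb_eq_of_orb (e := (x1 == m) && (x2 == d))).
- by move=> /andP[/eqP -> H]; case: (@Hinterior x2 ltac:(lia) ltac:(lia)).
- by move=> /andP[/eqP -> /eqP ->]; rewrite Hmd.
- by rewrite /region /=; do !case: ifP; lia.
Qed.

Lemma region_word_lower : region_word m c d 3 S =
  if (m.+1, c) \in S then dec_word (m + c) k.+1 else dec_word (m + c).+1 k.
Proof.
rewrite /region_word; case: ifP => Hm1c.
  rewrite (@sort_filter_row_segment _ _ m.+1 c k.+1) // ?antidiag_row_segment; [congr dec_word; lia | lia |].
  move=> [x1 x2]; rewrite mem_row_segment /=; apply: (andb_eq_of_orb (e := false)) => //.
    move=> /andP[/eqP -> H]; case: (ltnP c x2) => H2; first by case: (@Hinterior x2 H2 ltac:(lia)).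
    by have -> : x2 = c by lia.
  by rewrite /region /= orbF; do !case: ifP; lia.
rewrite (@sort_filter_row_segment _ _ m.+1 c.+1 k) // ?antidiag_row_segment; [congr dec_word; lia | lia |].
move=> [x1 x2]; rewrite mem_row_segment /=.
apply: (andb_eq_of_orb (e := (x1 == m.+1) && (x2 == c))).
- by move=> /andP[/eqP -> H]; case: (@Hinterior x2 ltac:(lia) ltac:(lia)).
- by move=> /andP[/eqP -> /eqP ->]; rewrite Hm1c.
- by rewrite /region /=; do !case: ifP; lia.
Qed.

(* The crosses of region 2 sit on antidiagonals [<= m + c - 2] or [>= m + d + 1],
   far from those of the lower segment. *)
Lemma region_word_middle_distant x : m + c <= x <= m + c + k ->
  all (distant x) (region_word m c d 2 S).
Proof.
move=> Hx; apply/allP => y /mapP [[p1 p2]].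
rewrite mem_sort mem_filter => /andP[/eqP /region2 /= Hp HpS] ->.
have Hne1 : (p1, p2) != (m, c) by apply: contraNneq Hmc => <-.
have Hne2 : (p1, p2) != (m.+1, d) by apply: contraNneq Hm1d => <-.
have Hp2 : 0 < p2 by case/andP: HS => _ /allP /(_ _ HpS) /andP[].
by move: Hne1 Hne2; rewrite /distant /antidiag !xpair_eqE /=; lia.
Qed.

Lemma reading_word_chute_frame :
  hecke_eq (reading_word S)
    (region_word m c d 0 S ++ chute_word (m + c) k ((m, d) \in S) ((m.+1, c) \in S) ++
     region_word m c d 2 S ++ region_word m c d 4 S).
Proof.
rewrite (reading_word_regions m c d) region_word_upper region_word_lower /chute_word.
apply: hecke_eq_catl; rewrite -!catA; apply: hecke_eq_catl; rewrite !catA; apply: hecke_eq_catr.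
apply: hecke_eq_sym; apply: hecke_eq_comm_words; apply/allP => x Hx.
apply: region_word_middle_distant.
by move: Hx; case: ifP => _ /dec_word_mem; lia.
Qed.

End ChuteFrame.

Lemma chute_move_frame D D' : chute_move D D' -> exists m c d,
  [/\ chute_frame D m c d, (m, c) \notin D & (m.+1, d) \notin D] /\
  [/\ (m, d) \in D, ((m, d) \in D') || ((m.+1, c) \in D') &
      forall x, x != (m, d) -> x != (m.+1, c) -> (x \in D') = (x \in D)].
Proof.
move=> [m [c [d Hmove]]]; exists m, c, d.
have Hcd : c < d by case: Hmove => [[[_ [_ []]]] | [[[_ [_ []]]] | [[_ [_ []]]]]].
have Hne : ((m.+1, c) == (m, d)) = false by rewrite xpair_eqE; lia.
have Hne' : ((m, d) == (m.+1, c)) = false by rewrite eq_sym.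
case: Hmove => [[? [? [? [? [? HE]]]]] | [[? [? [? [? [? HE]]]]] | [? [? [? [? [? HE]]]]]]];
  do 2!split; rewrite // ?HE ?eqxx ?Hne ?Hne' /= ?orbT ?orbF //;
  by move=> x /negbTE Hxd /negbTE Hxc; rewrite HE ?Hxd ?Hxc ?orbF.
Qed.

Lemma demazure_chute_move D D' : pipe_dream D -> pipe_dream D' ->
  chute_move D D' -> demazure D = demazure D'.
Proof.
move=> HD HD' /chute_move_frame [m [c [d [[[Hm [Hc [Hcd Hint]]] Hmc Hm1d] [Hmd Hcorner HE]]]]].
have [k Ed] : exists k, d = c + k + 1 by exists (d - c.+1); lia.
subst d.
have Hint' j : c < j -> j < c + k + 1 -> ((m, j) \in D') /\ ((m.+1, j) \in D').
  by move=> H1 H2; have [H3 H4] := Hint j H1 H2; rewrite !HE ?H3 ?H4 // !xpair_eqE; lia.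
have Hmc' : (m, c) \notin D' by rewrite HE // !xpair_eqE; lia.
have Hm1d' : (m.+1, c + k + 1) \notin D' by rewrite HE // !xpair_eqE; lia.
have Hregion i : i != 1 -> i != 3 -> region_word m c (c + k + 1) i D = region_word m c (c + k + 1) i D'.
  move=> H1 H3; congr map; apply: sort_read_le_filter_eq_mem.
  - by case/andP: HD.
  - by case/andP: HD'.
  move=> x /eqP Hx; rewrite HE //.
    by apply: contraNneq H1 => Ex; rewrite -Hx Ex /region /=; do !case: ifP; lia.
  by apply: contraNneq H3 => Ex; rewrite -Hx Ex /region /=; do !case: ifP; lia.
have Hidp : injective idp by [].
rewrite !demazure_dstar // (reading_word_chute_frame HD Hm Hc Hint Hmc Hm1d Hidp).
rewrite (reading_word_chute_frame HD' Hm Hc Hint' Hmc' Hm1d' Hidp) -!Hregion //.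
apply: (hecke_eq_catl _ (hecke_eq_catr _ (hecke_eq_chute_word _ _ _ _)) Hidp) => //.
by rewrite Hmd.
Qed.

Theorem theorem2p2 (w : perm_fun) (D D' : seq (nat * nat)) :
  in_Sinf w -> in_P w D -> pipe_dream D' ->
  chute_move D D' \/ inv_chute_move D D' ->
  in_P w D'.
Proof.
move=> _ [HD <-] HD' [Hmove | Hmove]; split => //.
  by rewrite (demazure_chute_move HD HD' Hmove).
by rewrite (demazure_chute_move HD' HD Hmove).
Qed.
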